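(* Let $G(\pi_i,\pi_i')=\frac12\|\pi_i-\pi_i'\|^2$ and $\mu>0$. Assume $\sqrt{\sum_{i=1}^N\|\nabla_{\pi_i}v_i(\pi)\|^2}\le\zeta$ for all $\pi\in\mathcal X$. Then for any $\sigma,\sigma'\in\mathcal X$, $$\|\pi^{\mu,\sigma}-\sigma\|^2\le\|\sigma-\sigma'\|^2+\frac{2\zeta}{\mu}\|\pi^{\mu,\sigma'}-\sigma\|.$$ (In the paper this is applied with $\sigma=\sigma^k$, $\sigma'=\sigma^{k-1}$.)
   Context: Game. Let $N\ge1$. For each $i\in[N]$, $\mathcal X_i\subseteq\mathbb R^{d_i}$ is a nonempty compact convex set, and $\mathcal X=\prod_i\mathcal X_i$. Each $v_i:\mathcal X\to\mathbb R$ is differentiable, with block gradient $\nabla_{\pi_i}v_i$. The norm is Euclidean, with $\|\pi\|^2=\sum_i\|\pi_i\|^2$. The game is monotone: $\sum_i\langle\nabla_{\pi_i}v_i(\pi)-\nabla_{\pi_i}v_i(\pi'),\pi_i-\pi_i'\rangle\le0$ for all $\pi,\pi'$. Perturbed equilibrium. For $\mu>0$ and $\sigma\in\mathcal X$, $\pi^{\mu,\sigma}$ is the (unique) profile with $\pi_i^{\mu,\sigma}\in\arg\max_{\pi_i\in\mathcal X_i}\{v_i(\pi_i,\pi^{\mu,\sigma}_{-i})-\mu G(\pi_i,\sigma_i)\}$ for all $i$. *)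

From HB Require Import structures.
From mathcomp Require Import all_boot all_order all_algebra.
From mathcomp Require Import all_classical all_reals all_analysis.
Set Implicit Arguments. Unset Strict Implicit. Unset Printing Implicit Defensive.
Import Order.TTheory GRing.Theory Num.Theory.
Import numFieldNormedType.Exports.
Local Open Scope classical_set_scope.
Local Open Scope ring_scope.

Section Game.
Variables (R : realType) (N : nat) (d : 'I_N -> nat).

Definition profile := forall i : 'I_N, 'rV[R]_(d i).

Definition vdot n (x y : 'rV[R]_n) : R := \sum_(j < n) x 0 j * y 0 j.
Definition vnorm2 n (x : 'rV[R]_n) : R := vdot x x.
Definition vnorm n (x : 'rV[R]_n) : R := Num.sqrt (vnorm2 x).

Definition psub (p q : profile) : profile := fun i => p i - q i.
Definition pdot (p q : profile) : R := \sum_(i < N) vdot (p i) (q i).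
Definition pnorm2 (p : profile) : R := pdot p p.
Definition pnorm (p : profile) : R := Num.sqrt (pnorm2 p).

Definition in_prod (X : forall i : 'I_N, set 'rV[R]_(d i)) (p : profile) : Prop :=
  forall i, X i (p i).

Definition deviate (p : profile) (i : 'I_N) (x : 'rV[R]_(d i)) : profile :=
  @dfwith _ (fun j : 'I_N => 'rV[R]_(d j)) p i x.

End Game.

Definition convex_set_rV (R : realType) n (S : set 'rV[R]_n) : Prop :=
  forall x y, S x -> S y -> forall t : R, 0 <= t <= 1 ->
    S (t *: x + (1 - t) *: y).

Definition differentiable_on_with_grad (R : realType) N (d : 'I_N -> nat)
    (X : forall i : 'I_N, set 'rV[R]_(d i))
    (v : profile R d -> R) (Dv : profile R d -> profile R d) : Prop :=
  forall p, in_prod X p ->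
    forall eps : R, 0 < eps -> exists delta : R, 0 < delta /\
      forall q, in_prod X q -> pnorm (psub q p) < delta ->
        `|v q - v p - pdot (Dv p) (psub q p)| <= eps * pnorm (psub q p).

Definition Gsq (R : realType) n (x y : 'rV[R]_n) : R := 2^-1 * vnorm2 (x - y).

Definition perturbed_eq (R : realType) N (d : 'I_N -> nat)
    (X : forall i : 'I_N, set 'rV[R]_(d i))
    (v : 'I_N -> profile R d -> R) (mu : R) (sigma pi : profile R d) : Prop :=
  in_prod X pi /\
  forall i (x : 'rV[R]_(d i)), X i x ->
    v i (deviate pi x) - mu * Gsq x (sigma i) <= v i pi - mu * Gsq (pi i) (sigma i).

From HB Require Import structures.
From mathcomp Require Import all_boot all_order all_algebra.
From mathcomp Require Import all_classical all_reals all_analysis.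
From mathcomp Require Import ring lra.
Import Order.TTheory GRing.Theory Num.Theory.
Import numFieldNormedType.Exports.
Local Open Scope classical_set_scope.
Local Open Scope ring_scope.

Set Implicit Arguments. Unset Strict Implicit.

(* Write g(p) for the pseudo-gradient (grad_{p_i} v_i(p))_i.
   1. First-order condition: a mu-perturbed equilibrium pi with anchor sigma
      solves the variational inequality
        <g(pi), x - pi> <= mu <pi - sigma, x - pi>   for all x in X;
      blockwise this follows from differentiability of v_i and optimality of
      pi_i against small moves towards x_i inside the convex set X_i.
   2. For pi = pi^{mu,sigma} and pi' = pi^{mu,sigma'}, the inequality at x = pi'
      and at x = pi, added and combined with monotonicity, give
        <pi - sigma, pi - pi'> <= <pi' - sigma', pi - pi'>.
   3. The inequality for pi' at x = sigma and Cauchy-Schwarz with the gradient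
      bound give  mu <pi' - sigma', pi' - sigma> <= zeta ||pi' - sigma||.
   4. A purely Euclidean inequality between four points turns 2 and 3 into the
      claimed bound. *)

Section RowVectorGeometry.
Variable R : realType.

Lemma vdotC n (x y : 'rV[R]_n) : vdot x y = vdot y x.
Proof. by apply: eq_bigr => j _; rewrite mulrC. Qed.

Lemma vdotDl n (x y z : 'rV[R]_n) : vdot (x + y) z = vdot x z + vdot y z.
Proof. by rewrite /vdot -big_split; apply: eq_bigr => j _; rewrite mxE mulrDl. Qed.

Lemma vdotBl n (x y z : 'rV[R]_n) : vdot (x - y) z = vdot x z - vdot y z.
Proof. by rewrite /vdot -sumrB; apply: eq_bigr => j _; rewrite !mxE mulrBl. Qed.

Lemma vdotZl n a (x z : 'rV[R]_n) : vdot (a *: x) z = a * vdot x z.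
Proof. by rewrite /vdot mulr_sumr; apply: eq_bigr => j _; rewrite mxE mulrA. Qed.

Lemma vdotDr n (x y z : 'rV[R]_n) : vdot z (x + y) = vdot z x + vdot z y.
Proof. by rewrite vdotC vdotDl !(vdotC z). Qed.

Lemma vdotZr n a (x z : 'rV[R]_n) : vdot z (a *: x) = a * vdot z x.
Proof. by rewrite vdotC vdotZl vdotC. Qed.

Lemma vdot0r n (x : 'rV[R]_n) : vdot x 0 = 0.
Proof. by rewrite /vdot big1 // => j _; rewrite mxE mulr0. Qed.

Lemma vnorm2_ge0 n (x : 'rV[R]_n) : 0 <= vnorm2 x.
Proof. by apply: sumr_ge0 => j _; rewrite -expr2 sqr_ge0. Qed.

Lemma vnorm2_addZ n (a b : 'rV[R]_n) t :
  vnorm2 (a + t *: b) = vnorm2 a + 2 * t * vdot a b + t ^+ 2 * vnorm2 b.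
Proof. by rewrite /vnorm2 vdotDl !vdotDr !vdotZl !vdotZr (vdotC b a); ring. Qed.

Lemma vnormZ n t (x : 'rV[R]_n) : 0 <= t -> vnorm (t *: x) = t * vnorm x.
Proof.
move=> t_ge0; rewrite /vnorm /vnorm2 vdotZl vdotZr mulrA -expr2.
by rewrite sqrtrM ?sqr_ge0 // sqrtr_sqr ger0_norm.
Qed.

Lemma Gsq_segment n (a h s : 'rV[R]_n) t :
  Gsq (a + t *: h) s = Gsq a s + t * vdot (a - s) h + t ^+ 2 / 2 * vnorm2 h.
Proof. by rewrite /Gsq addrAC vnorm2_addZ; field. Qed.

Lemma nonneg_quadratic_discriminant (a b c : R) :
  0 <= b -> (forall t, 0 <= a + 2 * t * c + t ^+ 2 * b) -> c ^+ 2 <= a * b.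
Proof.
move=> b_ge0 quad_ge0.
have [b0|b_neq0] := eqVneq b 0.
  suff -> : c = 0 by rewrite b0 expr0n mulr0.
  apply/eqP/negPn/negP => c_neq0.
  have := quad_ge0 (- (a + 1) / (2 * c)); rewrite b0 mulr0 addr0.
  have -> : 2 * (- (a + 1) / (2 * c)) * c = - (a + 1) by field.
  lra.
have b_gt0 : 0 < b by rewrite lt_neqAle eq_sym b_neq0.
have := quad_ge0 (- c / b).
have -> : a + 2 * (- c / b) * c + (- c / b) ^+ 2 * b = (a * b - c ^+ 2) / b.
  by field; rewrite gt_eqF.
by rewrite pmulr_lge0 ?invr_gt0 // subr_ge0.
Qed.

End RowVectorGeometry.

Section ProfileGeometry.
Variables (R : realType) (N : nat) (d : 'I_N -> nat).
Implicit Types p q r : profile R d.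

Lemma pdotC p q : pdot p q = pdot q p.
Proof. by apply: eq_bigr => i _; rewrite vdotC. Qed.

Lemma pdotBl p q r : pdot (psub p q) r = pdot p r - pdot q r.
Proof. by rewrite /pdot -sumrB; apply: eq_bigr => i _; rewrite vdotBl. Qed.

Lemma pdotBr p q r : pdot r (psub p q) = pdot r p - pdot r q.
Proof. by rewrite pdotC pdotBl !(pdotC r). Qed.

Lemma pdot_psubC p q r : pdot r (psub q p) = - pdot r (psub p q).
Proof. by rewrite !pdotBr opprB. Qed.

Lemma pnorm2_ge0 p : 0 <= pnorm2 p.
Proof. by apply: sumr_ge0 => i _; apply: vnorm2_ge0. Qed.

Lemma pnorm2_addZ p q t :
  pnorm2 (fun i => p i + t *: q i) = pnorm2 p + 2 * t * pdot p q + t ^+ 2 * pnorm2 q.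
Proof.
rewrite /pnorm2 /pdot mulr_sumr mulr_sumr -!big_split /=.
by apply: eq_bigr => i _; exact: vnorm2_addZ.
Qed.

Lemma pdot_le_pnorm p q : pdot p q <= pnorm p * pnorm q.
Proof.
have disc : pdot p q ^+ 2 <= pnorm2 p * pnorm2 q.
  apply: nonneg_quadratic_discriminant => [|t]; first exact: pnorm2_ge0.
  by rewrite -pnorm2_addZ pnorm2_ge0.
rewrite /pnorm -sqrtrM ?pnorm2_ge0 //.
by apply: le_trans (ler_norm _) _; rewrite -sqrtr_sqr ler_wsqrtr.
Qed.

(* It follows from ||(pi' - sigma') - (pi - pi')||^2 >= 0. *)
Lemma four_point_inequality (pi pi' sigma sigma' : profile R d) (k : R) :
  pdot (psub pi sigma) (psub pi pi') <= pdot (psub pi' sigma') (psub pi pi') ->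
  pdot (psub pi' sigma') (psub pi' sigma) <= k * pnorm (psub pi' sigma) ->
  pnorm2 (psub pi sigma) <= pnorm2 (psub sigma sigma') + 2 * k * pnorm (psub pi' sigma).
Proof.
have := pnorm2_ge0 (psub (psub pi' sigma') (psub pi pi')).
rewrite /pnorm2 !pdotBl !pdotBr.
move: (pdotC pi pi') (pdotC pi sigma) (pdotC pi sigma') (pdotC pi' sigma)
  (pdotC pi' sigma') (pdotC sigma sigma').
lra.
Qed.

End ProfileGeometry.

Section UnilateralDeviation.
Variables (R : realType) (N : nat) (d : 'I_N -> nat).
Variable X : forall i : 'I_N, set 'rV[R]_(d i).
Arguments X : clear implicits.

Lemma deviate_in (p : profile R d) i (y : 'rV[R]_(d i)) : deviate p y i = y.
Proof. exact: dfwith_in. Qed.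

Lemma deviate_out (p : profile R d) i (y : 'rV[R]_(d i)) j :
  j != i -> deviate p y j = p j.
Proof. by rewrite eq_sym; exact: dfwith_out. Qed.

Lemma in_prod_deviate (p : profile R d) i (y : 'rV[R]_(d i)) :
  in_prod X p -> X i y -> in_prod X (deviate p y).
Proof.
move=> Xp Xy j; have [->|neq_ji] := eqVneq j i; first by rewrite deviate_in.
by rewrite deviate_out.
Qed.

Lemma pdot_deviate (r p : profile R d) i (y : 'rV[R]_(d i)) :
  pdot r (psub (deviate p y) p) = vdot (r i) (y - p i).
Proof.
rewrite /pdot (bigD1 i) //= big1 ?addr0 => [|j neq_ji].
  by rewrite /psub deviate_in.
by rewrite /psub deviate_out // subrr vdot0r.
Qed.

Lemma pnorm_deviate (p : profile R d) i (y : 'rV[R]_(d i)) :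
  pnorm (psub (deviate p y) p) = vnorm (y - p i).
Proof. by rewrite /pnorm /pnorm2 pdot_deviate /psub deviate_in. Qed.

Lemma convex_segment i (a x : 'rV[R]_(d i)) t :
  convex_set_rV (X i) -> X i a -> X i x -> 0 <= t <= 1 -> X i (a + t *: (x - a)).
Proof.
move=> convX Xa Xx t01.
have -> : a + t *: (x - a) = t *: x + (1 - t) *: a.
  by apply/matrixP => r c; rewrite !mxE; ring.
exact: convX.
Qed.

Lemma deviation_lower_bound (f : profile R d -> R) (D : profile R d -> profile R d)
    (p : profile R d) i (x : 'rV[R]_(d i)) (eps : R) :
  convex_set_rV (X i) -> differentiable_on_with_grad X f D ->
  in_prod X p -> X i x -> 0 < eps ->
  exists2 t0 : R, 0 < t0 <= 1 & forall t, 0 < t <= t0 ->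
    t * (vdot (D p i) (x - p i) - eps) <= f (deviate p (p i + t *: (x - p i))) - f p.
Proof.
move=> convX diff_f Xp Xx eps_gt0.
set h := x - p i; set n := vnorm h.
have n1_gt0 : 0 < n + 1 by have : 0 <= n := sqrtr_ge0 _; lra.
set c := eps / (n + 1).
have c_gt0 : 0 < c by rewrite divr_gt0.
have c_eps : c * (n + 1) = eps by rewrite divfK // gt_eqF.
have [del [del_gt0 taylor]] := diff_f p Xp c c_gt0.
exists (Num.min 1 (del / (n + 1))).
  by rewrite lt_min ltr01 divr_gt0 //= ge_min lexx.
move=> t /andP[t_gt0]; rewrite le_min => /andP[t_le1 t_le_del].
have Xy : X i (p i + t *: h) by apply: convex_segment => //; rewrite ltW.
have step : p i + t *: h - p i = t *: h by rewrite addrC addKr.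
have dist : pnorm (psub (deviate p (p i + t *: h)) p) = t * n.
  by rewrite pnorm_deviate step vnormZ ?ltW.
have close : t * n < del.
  by move: t_le_del; rewrite ler_pdivlMr //; nra.
have := taylor _ (in_prod_deviate Xp Xy); rewrite dist pdot_deviate step vdotZr.
move=> /(_ close); rewrite ler_norml => /andP[lower _].
rewrite -c_eps; nra.
Qed.

End UnilateralDeviation.

Section PerturbedEquilibria.
Variables (R : realType) (N : nat) (d : 'I_N -> nat).
Variables (X : forall i : 'I_N, set 'rV[R]_(d i)) (v : 'I_N -> profile R d -> R).
Arguments X : clear implicits.
Variables (Dv : 'I_N -> profile R d -> profile R d) (mu : R).

Definition pgrad (p : profile R d) : profile R d := fun i => Dv i p i.

Lemma perturbed_eq_block_vi (sigma pi : profile R d) i (x : 'rV[R]_(d i)) :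
  convex_set_rV (X i) -> differentiable_on_with_grad X (v i) (Dv i) -> 0 < mu ->
  perturbed_eq X v mu sigma pi -> X i x ->
  vdot (Dv i pi i) (x - pi i) <= mu * vdot (pi i - sigma i) (x - pi i).
Proof.
move=> convXi diff_vi mu_gt0 [Xpi best_resp] Xx; set h := x - pi i.
apply/ler_addgt0Pr => e e_gt0.
have e2_gt0 : 0 < e / 2 by lra.
have [t0 /andP[t0_gt0 t0_le1] lower] :=
  deviation_lower_bound convXi diff_vi Xpi Xx e2_gt0.
have K_gt0 : 0 < mu * vnorm2 h + 1 by have := vnorm2_ge0 h; nra.
set t := Num.min t0 (e / (mu * vnorm2 h + 1)).
have t_gt0 : 0 < t by rewrite lt_min t0_gt0 divr_gt0.
have t01 : 0 <= t <= 1 by rewrite ltW //= ge_min t0_le1.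
have t_small : t * (mu * vnorm2 h + 1) <= e.
  by rewrite -ler_pdivlMr // ge_min lexx orbT.
have := lower t; rewrite t_gt0 ge_min lexx -/h => /(_ isT) gain.
have := best_resp i _ (convex_segment convXi (Xpi i) Xx t01).
rewrite Gsq_segment -/h => loss.
(* The first-order gain t (<g, h> - e/2) is at most the penalty increase
   mu (t <pi_i - sigma_i, h> + t^2/2 ||h||^2), and t mu ||h||^2 <= e. *)
suff : t * vdot (Dv i pi i) h <= t * (mu * vdot (pi i - sigma i) h + e).
  by rewrite ler_pM2l.
have := vnorm2_ge0 h; nra.
Qed.

Lemma perturbed_eq_vi (sigma pi x : profile R d) :
  (forall i, convex_set_rV (X i)) ->
  (forall i, differentiable_on_with_grad X (v i) (Dv i)) -> 0 < mu ->
  perturbed_eq X v mu sigma pi -> in_prod X x ->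
  pdot (pgrad pi) (psub x pi) <= mu * pdot (psub pi sigma) (psub x pi).
Proof.
move=> convX diff_v mu_gt0 eq_pi Xx; rewrite /pdot mulr_sumr.
apply: ler_sum => i _; exact: perturbed_eq_block_vi.
Qed.

Lemma perturbed_eq_residual_monotone (sigma sigma' pi pi' : profile R d) :
  (forall i, convex_set_rV (X i)) ->
  (forall i, differentiable_on_with_grad X (v i) (Dv i)) -> 0 < mu ->
  pdot (psub (pgrad pi) (pgrad pi')) (psub pi pi') <= 0 ->
  perturbed_eq X v mu sigma pi -> perturbed_eq X v mu sigma' pi' ->
  pdot (psub pi sigma) (psub pi pi') <= pdot (psub pi' sigma') (psub pi pi').
Proof.
move=> convX diff_v mu_gt0 mono eq_pi eq_pi'.
have vi_pi := perturbed_eq_vi convX diff_v mu_gt0 eq_pi eq_pi'.1.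
have vi_pi' := perturbed_eq_vi convX diff_v mu_gt0 eq_pi' eq_pi.1.
rewrite !(pdot_psubC pi pi') mulrN lerN2 in vi_pi; rewrite pdotBl in mono.
by rewrite -(ler_pM2l mu_gt0); lra.
Qed.

Lemma perturbed_eq_anchor_bound (zeta : R) (sigma sigma' pi : profile R d) :
  (forall i, convex_set_rV (X i)) ->
  (forall i, differentiable_on_with_grad X (v i) (Dv i)) -> 0 < mu ->
  pnorm (pgrad pi) <= zeta ->
  perturbed_eq X v mu sigma' pi -> in_prod X sigma ->
  mu * pdot (psub pi sigma') (psub pi sigma) <= zeta * pnorm (psub pi sigma).
Proof.
move=> convX diff_v mu_gt0 grad_le eq_pi Xsigma.
have := perturbed_eq_vi convX diff_v mu_gt0 eq_pi Xsigma.
rewrite !(pdot_psubC pi sigma) mulrN lerN2 => /le_trans; apply.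
apply: le_trans (pdot_le_pnorm _ _) _.
by rewrite ler_wpM2r ?sqrtr_ge0.
Qed.

End PerturbedEquilibria.

Theorem lemma14 (R : realType) (N : nat) (d : 'I_N -> nat)
  (X : forall i : 'I_N, set 'rV[R]_(d i))
  (v : 'I_N -> profile R d -> R)
  (Dv : 'I_N -> profile R d -> profile R d)
  (mu zeta : R) (sigma sigma' pi pi' : profile R d) :
  (0 < N)%N ->
  (forall i, X i !=set0) ->
  (forall i, compact (X i)) ->
  (forall i, convex_set_rV (X i)) ->
  (forall i, differentiable_on_with_grad X (v i) (Dv i)) ->
  (* monotonicity, with block gradients grad_{pi_i} v_i = (Dv i pi) i *)
  (forall p q, in_prod X p -> in_prod X q ->
     \sum_(i < N) vdot (Dv i p i - Dv i q i) (p i - q i) <= 0) ->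
  (* gradient bound *)
  (forall p, in_prod X p ->
     Num.sqrt (\sum_(i < N) vnorm2 (Dv i p i)) <= zeta) ->
  0 < mu ->
  in_prod X sigma -> in_prod X sigma' ->
  perturbed_eq X v mu sigma pi ->
  perturbed_eq X v mu sigma' pi' ->
  pnorm2 (psub pi sigma) <=
    pnorm2 (psub sigma sigma') + 2 * zeta / mu * pnorm (psub pi' sigma).
Proof.
move=> _ _ _ convX diff_v monotone grad_le mu_gt0 Xsigma _ eq_pi eq_pi'.
rewrite -[2 * zeta / mu]mulrA; apply: four_point_inequality.
  apply: (perturbed_eq_residual_monotone convX diff_v mu_gt0 _ eq_pi eq_pi').
  exact: monotone eq_pi.1 eq_pi'.1.
rewrite mulrAC ler_pdivlMr // mulrC.
exact: perturbed_eq_anchor_bound convX diff_v mu_gt0 (grad_le _ eq_pi'.1) eq_pi' Xsigma.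
Qed.
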